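(* Let $\nu\in\mathcal P_{2,0}(\mathbb R^d)$ and let $\mathcal D\subset\mathcal P_2(\mathbb R^d)$ be a nonempty, translation invariant cone. Define $$P_1=\sup\Big\{\int\langle x,y\rangle\,d\pi(x,y):\ \mu\in\mathcal D\cap\mathcal P_{2,0}(\mathbb R^d),\ \pi\in\Pi(\mu,\nu),\ \operatorname{Var}(\mu)\le1\Big\}.$$ Suppose $P_1>0$. Then: (a) if $(\hat\mu,\hat\pi)$ attains $P_1$, then $\operatorname{Var}(\hat\mu)=1$ and the dilation $(P_1)_\#\hat\mu$ maximizes $\operatorname{Var}$ over $\mathcal D\cap\mathcal M^K_\nu$; (b) conversely, if $\check\mu\ne\delta_0$ maximizes $\operatorname{Var}$ over $\mathcal D\cap\mathcal M^K_\nu$ and $\check\pi\in\operatorname{argmax}_{\pi\in\Pi(\check\mu,\nu)}\int\langle x,y\rangle d\pi$, then with $\check\lambda=\operatorname{Var}(\check\mu)^{-1/2}$ the pair $(\check\lambda_\#\check\mu,(\check\lambda\times\mathrm{id})_\#\check\pi)$ attains $P_1$. Moreover, $P_1=0$ if and only if the maximal value of $\operatorname{Var}$ over $\mathcal D\cap\mathcal M^K_\nu$ is $0$, in which case $\delta_0$ is a maximizer.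
   Context: $\mathcal P_2(\mathbb R^d)$: Borel probability measures with finite second moment; $\mathcal P_{2,0}$: those with zero mean. $\Pi(\mu,\nu)$: couplings. $\operatorname{Var}(\mu)=\int|x-\int z\,d\mu|^2d\mu$. Kantorovich dominance: $\mu\preceq_K\nu$ iff there is $\pi\in\Pi(\mu,\nu)$ with $\int\langle x-b_\nu,y-x\rangle\,d\pi=0$, $b_\nu=\int y\,d\nu$; $\mathcal M^K_\nu=\{\mu\in\mathcal P_2(\mathbb R^d):\mu\preceq_K\nu\}$. For $\lambda\in\mathbb R$, $\lambda_\#\mu$ is the law of $\lambda X$, $X\sim\mu$, and $(\lambda\times\mathrm{id})(x,y)=(\lambda x,y)$. $\mathcal D$ is a cone if $\lambda_\#\mu\in\mathcal D$ for all $\mu\in\mathcal D,\lambda\ge0$; translation invariant if $(T_k)_\#\mu\in\mathcal D$ for all $\mu\in\mathcal D$, $k\in\mathbb R^d$, $T_k(x)=x+k$. *)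

(* R^d is modelled as row vectors 'rV[R]_d with
   the Borel sigma-algebra (generated by the open sets). *)
From HB Require Import structures.
From mathcomp Require Import all_boot all_order all_algebra.
From mathcomp Require Import all_classical all_reals all_analysis.
Set Implicit Arguments. Unset Strict Implicit. Unset Printing Implicit Defensive.
Import Order.TTheory GRing.Theory Num.Theory numFieldNormedType.Exports.
Local Open Scope classical_set_scope.
Local Open Scope ring_scope.

Notation Rd R d :=
  (g_sigma_algebraType (@open ('M[R]_(1, d) : topologicalType))).

Section Defs.
Variables (R : realType) (d : nat).

Definition dotp (x y : 'rV[R]_d) : R := \sum_(i < d) x ord0 i * y ord0 i.
Definition sqnorm (x : 'rV[R]_d) : R := dotp x x.

Definition P2 (mu : probability (Rd R d) R) : Prop :=
  mu.-integrable setT (fun x : (Rd R d) => (sqnorm x)%:E).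

Definition mean (mu : probability (Rd R d) R) : 'rV[R]_d :=
  \row_(i < d) Rintegral mu setT (fun x : (Rd R d) => (x : 'rV[R]_d) ord0 i).

Definition P20 (mu : probability (Rd R d) R) : Prop := P2 mu /\ mean mu = 0.

Definition Var (mu : probability (Rd R d) R) : R :=
  Rintegral mu setT (fun x : (Rd R d) => sqnorm ((x : 'rV[R]_d) - mean mu)).

Definition coupling (mu nu : probability (Rd R d) R)
    (pi : probability ((Rd R d) * (Rd R d))%type R) : Prop :=
  forall A : set (Rd R d), measurable A ->
    pi (A `*` setT) = mu A /\ pi (setT `*` A) = nu A.

Definition corr (pi : probability ((Rd R d) * (Rd R d))%type R) : R :=
  Rintegral pi setT (fun z : (Rd R d) * (Rd R d) => dotp z.1 z.2).

Definition Kdom (mu nu : probability (Rd R d) R) : Prop :=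
  exists pi, coupling mu nu pi /\
    Rintegral pi setT
      (fun z : (Rd R d) * (Rd R d) => dotp ((z.1 : 'rV[R]_d) - mean nu)
                               ((z.2 : 'rV[R]_d) - z.1)) = 0.
Definition MK (nu : probability (Rd R d) R) : set (probability (Rd R d) R) :=
  [set mu | P2 mu /\ Kdom mu nu].

Definition is_push (f : (Rd R d) -> (Rd R d)) (mu rho : probability (Rd R d) R) : Prop :=
  forall A : set (Rd R d), measurable A -> rho A = mu (f @^-1` A).
Definition is_push2 (f : (Rd R d) * (Rd R d) -> (Rd R d) * (Rd R d))
    (pi gam : probability ((Rd R d) * (Rd R d))%type R) : Prop :=
  forall A : set ((Rd R d) * (Rd R d)), measurable A -> gam A = pi (f @^-1` A).

Definition dil (lam : R) : (Rd R d) -> (Rd R d) := fun x => lam *: (x : 'rV[R]_d).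
Definition transl (k : 'rV[R]_d) : (Rd R d) -> (Rd R d) := fun x => (x : 'rV[R]_d) + k.

Definition is_cone (D : set (probability (Rd R d) R)) : Prop :=
  forall mu rho, D mu -> forall lam : R, 0 <= lam ->
    is_push (dil lam) mu rho -> D rho.
Definition transl_invariant (D : set (probability (Rd R d) R)) : Prop :=
  forall mu rho, D mu -> forall k : 'rV[R]_d,
    is_push (transl k) mu rho -> D rho.

Definition is_delta0 (rho : probability (Rd R d) R) : Prop :=
  forall A : set (Rd R d), measurable A -> rho A = \d_(0 : (Rd R d)) A.

Definition feasible1 (D : set (probability (Rd R d) R)) (nu : probability (Rd R d) R)
    (mu : probability (Rd R d) R) (pi : probability ((Rd R d) * (Rd R d))%type R) : Prop :=
  D mu /\ P20 mu /\ coupling mu nu pi /\ Var mu <= 1.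

Definition P1 (D : set (probability (Rd R d) R)) (nu : probability (Rd R d) R) : \bar R :=
  ereal_sup [set (corr pi)%:E | pi in
    [set pi | exists mu, feasible1 D nu mu pi]].

Definition attainsP1 D nu mu pi : Prop :=
  feasible1 D nu mu pi /\ (corr pi)%:E = P1 D nu.

Definition maxVar (D : set (probability (Rd R d) R)) (nu : probability (Rd R d) R)
    (rho : probability (Rd R d) R) : Prop :=
  (D `&` MK nu) rho /\ forall mu, (D `&` MK nu) mu -> Var mu <= Var rho.

End Defs.

From HB Require Import structures.
From mathcomp Require Import all_boot all_order all_algebra.
From mathcomp Require Import all_classical all_reals all_analysis.
From mathcomp Require Import ring lra measurable_realfun.
Set Implicit Arguments. Unset Strict Implicit. Unset Printing Implicit Defensive.
Import Order.TTheory GRing.Theory Num.Theory numFieldNormedType.Exports.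
Local Open Scope classical_set_scope.
Local Open Scope ring_scope.

(* The two problems are exchanged by dilations.  If [mu] is Kantorovich
   dominated by [nu] and has variance [v > 0], its Kantorovich coupling has
   correlation [E|X|^2 = v + |mean mu|^2]; centring [mu] and scaling it by
   [v^(-1/2)] gives a feasible pair for [P_1], so
   [P_1 >= (v + |mean mu|^2) / sqrt v >= sqrt v].  Conversely a feasible pair
   with correlation [c > 0] has variance [w] in [(0, 1]], and scaling it by
   [c / w] makes the Kantorovich integral vanish, which yields an element of
   [D /\ M^K_nu] of variance [c^2 / w >= c^2].  Hence [P_1^2] is the maximal
   variance, and the equality cases of the two bounds give (a) and (b). *)

Section DotProduct.
Context {R : realType} {d : nat}.
Implicit Types x y z : 'rV[R]_d.

Lemma dotpC x y : dotp x y = dotp y x.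
Proof. by apply: eq_bigr => i _; rewrite mulrC. Qed.

Lemma dotpDl x y z : dotp (x + y) z = dotp x z + dotp y z.
Proof. by rewrite /dotp -big_split; apply: eq_bigr => i _; rewrite mxE mulrDl. Qed.

Lemma dotpNl x z : dotp (- x) z = - dotp x z.
Proof. by rewrite /dotp -sumrN; apply: eq_bigr => i _; rewrite mxE mulNr. Qed.

Lemma dotpBl x y z : dotp (x - y) z = dotp x z - dotp y z.
Proof. by rewrite dotpDl dotpNl. Qed.

Lemma dotpZl a x z : dotp (a *: x) z = a * dotp x z.
Proof. by rewrite /dotp mulr_sumr; apply: eq_bigr => i _; rewrite mxE mulrA. Qed.

Lemma dotpBr x y z : dotp z (x - y) = dotp z x - dotp z y.
Proof. by rewrite dotpC dotpBl !(dotpC z). Qed.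

Lemma dotpZr a x z : dotp z (a *: x) = a * dotp z x.
Proof. by rewrite dotpC dotpZl dotpC. Qed.

Lemma dotp0l z : dotp 0 z = 0.
Proof. by rewrite /dotp big1 // => i _; rewrite mxE mul0r. Qed.

Lemma sqnorm0 : sqnorm (0 : 'rV[R]_d) = 0.
Proof. exact: dotp0l. Qed.

Lemma sqnorm_ge0 x : 0 <= sqnorm x.
Proof. by rewrite /sqnorm /dotp sumr_ge0 // => i _; rewrite -expr2 sqr_ge0. Qed.

Lemma sqnorm_eq0 x : sqnorm x = 0 -> x = 0.
Proof.
move=> /eqP; rewrite /sqnorm /dotp psumr_eq0 => [/allP x0|i _]; last first.
  by rewrite -expr2 sqr_ge0.
apply/rowP => i; rewrite mxE; apply/eqP.
by have := x0 i (mem_index_enum _); rewrite /= mulf_eq0 orbb.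
Qed.

Lemma sqnormB x y : sqnorm (x - y) = sqnorm x - 2 * dotp x y + sqnorm y.
Proof. rewrite /sqnorm dotpBl !dotpBr (dotpC y x); ring. Qed.

Lemma sqnormN x : sqnorm (- x) = sqnorm x.
Proof. by rewrite /sqnorm dotpNl dotpC dotpNl opprK. Qed.

Lemma sqnormZ a x : sqnorm (a *: x) = a ^+ 2 * sqnorm x.
Proof. by rewrite /sqnorm dotpZl dotpZr mulrA expr2. Qed.

Lemma dotp_le_sqnorm x y s : 0 < s -> 2 * dotp x y <= s * sqnorm x + s^-1 * sqnorm y.
Proof.
move=> s0; have := mulr_ge0 (ltW s0) (sqnorm_ge0 (x - s^-1 *: y)).
rewrite sqnormB sqnormZ dotpZr.
suff -> : s * (sqnorm x - 2 * (s^-1 * dotp x y) + s^-1 ^+ 2 * sqnorm y) =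
  s * sqnorm x + s^-1 * sqnorm y - 2 * dotp x y by rewrite subr_ge0.
field; exact: lt0r_neq0.
Qed.

Lemma norm_dotp_le x y : `|dotp x y| <= sqnorm x + sqnorm y.
Proof.
have := dotp_le_sqnorm x y ltr01; have := dotp_le_sqnorm (- x) y ltr01.
rewrite sqnormN dotpNl invr1 !mul1r ler_norml => h1 h2.
by apply/andP; split; lra.
Qed.

Lemma norm_coord_le x i : `|x ord0 i| <= sqnorm x + 1.
Proof.
rewrite /sqnorm /dotp (bigD1 i) //=.
have : 0 <= \sum_(j < d | j != i) x ord0 j * x ord0 j.
  by apply: sumr_ge0 => j _; rewrite -expr2 sqr_ge0.
set a := x ord0 i; have : `|a| <= a * a + 1.
  by case: (lerP 0 a) => a0; [rewrite ger0_norm|rewrite ltr0_norm]; nra.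
lra.
Qed.

End DotProduct.

Section Measurability.
Context {R : realType} {d : nat}.
Local Notation T := (Rd R d).

Lemma continuous_measurable_real (f : 'rV[R]_d -> R) : continuous f ->
  measurable_fun [set: T] (f : T -> R).
Proof.
move=> /continuousP cf.
apply: (measurability _ (measurable_realfun.RGenOpens.measurableE R)).
move=> _ [_ [a [b ->]] <-]; apply: sub_sigma_algebra; rewrite setTI.
exact/cf/interval_open.
Qed.

Lemma continuous_measurable_Rd (f : 'rV[R]_d -> 'rV[R]_d) : continuous f ->
  measurable_fun [set: T] (f : T -> T).
Proof.
move=> /continuousP cf; apply: (measurability _ (erefl (@measurable _ T))).
by move=> _ [A oA <-]; apply: sub_sigma_algebra; rewrite setTI; exact/cf.
Qed.

Lemma measurable_coord (i : 'I_d) :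
  measurable_fun [set: T] (fun x : T => (x : 'rV[R]_d) ord0 i).
Proof. exact: continuous_measurable_real (@coord_continuous _ _ _ _ _). Qed.

Lemma measurable_dil (t : R) : measurable_fun [set: T] (dil t).
Proof. exact: continuous_measurable_Rd (@scaler_continuous _ _ t). Qed.

Lemma measurable_transl k : measurable_fun [set: T] (transl k).
Proof.
apply: (@continuous_measurable_Rd (fun x => x + k)) => x.
by apply: continuousD; [exact: cvg_id|exact: cst_continuous].
Qed.

Lemma measurable_map_fst (f : T -> T) : measurable_fun setT f ->
  measurable_fun [set: T * T] (fun z : T * T => (f z.1, z.2)).
Proof.
by move=> mf; apply: measurable_fun_pair => //; exact: measurableT_comp mf _.
Qed.

(* Componentwise measurability, which is all that [dotp] needs. *)
Definition measurable_row dX (X : measurableType dX) (f : X -> 'rV[R]_d) :=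
  forall i, measurable_fun [set: X] (fun x => f x ord0 i).

Context dX (X : measurableType dX).
Implicit Types f g : X -> 'rV[R]_d.

Lemma measurable_row_dotp f g : measurable_row f -> measurable_row g ->
  measurable_fun setT (fun x => dotp (f x) (g x)).
Proof. by move=> mf mg; apply: measurable_sum => i; exact: measurable_funM. Qed.

Lemma measurable_rowB f g : measurable_row f -> measurable_row g ->
  measurable_row (fun x => f x - g x).
Proof.
move=> mf mg i; rewrite (_ : (fun x => _) = (fun x => f x ord0 i - g x ord0 i)).
  exact: measurable_funB.
by apply/funext => x; rewrite !mxE.
Qed.

Lemma measurable_row_cst (k : 'rV[R]_d) : measurable_row (fun _ : X => k).
Proof. by move=> i; exact: measurable_cst. Qed.

Lemma measurable_row_comp (h : X -> T) : measurable_fun setT h ->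
  measurable_row (fun x => (h x : 'rV[R]_d)).
Proof. by move=> mh i; exact: measurableT_comp (measurable_coord i) mh. Qed.

End Measurability.

Section RealIntegrability.
Context {R : realType} dX (X : measurableType dX) (m : {measure set X -> \bar R}).
Implicit Types f g h : X -> R.

Lemma eq_integrableR f g : m.-integrable setT (EFin \o f) -> f =1 g ->
  m.-integrable setT (EFin \o g).
Proof.
by move=> mf fg; apply: (eq_integrable measurableT (EFin \o f)) mf => x _ /=; rewrite fg.
Qed.

Lemma integrableRZl a f : m.-integrable setT (EFin \o f) ->
  m.-integrable setT (EFin \o (fun x => a * f x)).
Proof. by move=> mf; exact: eq_integrableR (integrableZl measurableT a mf) _. Qed.

Lemma integrableRD f g : m.-integrable setT (EFin \o f) ->
  m.-integrable setT (EFin \o g) -> m.-integrable setT (EFin \o (fun x => f x + g x)).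
Proof. by move=> mf mg; exact: eq_integrableR (integrableD measurableT mf mg) _. Qed.

Lemma integrableRB f g : m.-integrable setT (EFin \o f) ->
  m.-integrable setT (EFin \o g) -> m.-integrable setT (EFin \o (fun x => f x - g x)).
Proof. by move=> mf mg; exact: eq_integrableR (integrableB measurableT mf mg) _. Qed.

Lemma Rintegral_sum (I : eqType) (s : seq I) (f : I -> X -> R) :
  (forall i, m.-integrable setT (EFin \o f i)) ->
  Rintegral m setT (fun x => \sum_(i <- s) f i x) = \sum_(i <- s) Rintegral m setT (f i).
Proof.
move=> mf; elim: s => [|a s IH].
  by rewrite big_nil; under eq_Rintegral do rewrite big_nil; rewrite Rintegral_cst// mul0r.
rewrite big_cons -IH -RintegralD //.
  by apply: eq_Rintegral => x _; rewrite big_cons.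
rewrite (_ : EFin \o _ = fun x => \sum_(i <- s) (EFin \o f i) x).
  exact: integrable_sum.
by apply/funext => x /=; rewrite sumEFin.
Qed.

End RealIntegrability.

Section ProbabilityIntegrability.
Context {R : realType} dX (X : measurableType dX) (P : probability X R).

Lemma Rintegral_prob_cst (c : R) : Rintegral P setT (fun _ => c) = c.
Proof.
rewrite Rintegral_cst // (_ : fine _ = 1) ?mulr1 //.
by rewrite -[1]/(fine 1%:E); congr fine; exact: probability_setT.
Qed.

Lemma integrable_prob_cst (c : R) : P.-integrable setT (EFin \o (fun _ : X => c)).
Proof. exact: finite_measure_integrable_cst. Qed.

Lemma integrable_dominated (f h : X -> R) c : measurable_fun setT f ->
  P.-integrable setT (EFin \o h) -> (forall x, `|f x| <= h x + c) ->
  P.-integrable setT (EFin \o f).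
Proof.
move=> mf ih fh; have ihc := integrableRD ih (integrable_prob_cst c).
apply: le_integrable ihc => //; first exact/measurable_EFinP.
by move=> x _ /=; rewrite lee_fin (le_trans (fh x)) // ler_norm.
Qed.

End ProbabilityIntegrability.

Section Pushforward.
Context {R : realType} dX dY (X : measurableType dX) (Y : measurableType dY).

(* [is_push] and [is_push2] of the statement are its instances on [Rd R d]. *)
Definition is_pushforward (f : X -> Y) (mu : set X -> \bar R) (rho : set Y -> \bar R) :=
  forall A, measurable A -> rho A = mu (f @^-1` A).

Definition pushprob (P : probability X R) (f : X -> Y) (mf : measurable_fun setT f) :
  probability Y R := distribution P (HB.pack f (isMeasurableFun.Build _ _ _ _ f mf)).

Lemma pushprobE (P : probability X R) (f : X -> Y) (mf : measurable_fun setT f) :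
  is_pushforward f P (pushprob P mf).
Proof. by []. Qed.

Variables (f : X -> Y) (mf : measurable_fun setT f).
Variables (mu : {measure set X -> \bar R}) (rho : {measure set Y -> \bar R}).
Hypothesis rhoE : is_pushforward f mu rho.

Lemma integrable_push (g : Y -> R) : measurable_fun setT g ->
  rho.-integrable setT (EFin \o g) <-> mu.-integrable setT (EFin \o (g \o f)).
Proof.
move=> mg; have mgE : measurable_fun setT (EFin \o g) by exact/measurable_EFinP.
have normE : (\int[rho]_y `|(g y)%:E| = \int[mu]_x `|(g (f x))%:E|)%E.
  rewrite (@eq_measure_integral _ _ _ _ (pushforward mu f)); last first.
    by move=> A mA _; exact: rhoE.
  by rewrite ge0_integral_pushforward //; exact: measurableT_comp mgE.
split => /integrableP [_ intg]; apply/integrableP; split.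
- exact/measurable_EFinP/measurableT_comp.
- by rewrite -normE.
- exact: mgE.
- by rewrite normE.
Qed.

Lemma Rintegral_push (g : Y -> R) : measurable_fun setT g ->
  mu.-integrable setT (EFin \o (g \o f)) ->
  Rintegral rho setT g = Rintegral mu setT (g \o f).
Proof.
move=> mg ig; rewrite /Rintegral; congr fine.
rewrite (@eq_measure_integral _ _ _ _ (pushforward mu f)); last first.
  by move=> A mA _; exact: rhoE.
by rewrite integral_pushforward //; exact/measurable_EFinP.
Qed.

End Pushforward.

Section Moments.
Context {R : realType} {d : nat}.
Local Notation T := (Rd R d).
Local Notation V := ('rV[R]_d).
Implicit Types (mu rho : probability T R).

Definition moment2 mu := Rintegral mu setT (fun x : T => sqnorm (x : V)).

Lemma measurable_sqnormB (k : V) :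
  measurable_fun [set: T] (fun x : T => sqnorm ((x : V) - k)).
Proof.
have mB : measurable_row (fun x : T => (x : V) - k).
  by apply: measurable_rowB; [exact: measurable_coord|exact: measurable_row_cst].
exact: (measurable_row_dotp mB mB).
Qed.

Lemma measurable_sqnorm : measurable_fun [set: T] (fun x : T => sqnorm (x : V)).
Proof. by apply: measurable_row_dotp; exact: measurable_coord. Qed.

Lemma measurable_dotp (k : V) : measurable_fun [set: T] (fun x : T => dotp (x : V) k).
Proof. by apply: measurable_row_dotp; [exact: measurable_coord|exact: measurable_row_cst]. Qed.

Lemma P2_integrable_dominated mu (f : T -> R) a c : P2 mu -> measurable_fun setT f ->
  (forall x : T, `|f x| <= a * sqnorm (x : V) + c) -> mu.-integrable setT (EFin \o f).
Proof. by move=> mu2 mf; apply: integrable_dominated mf (integrableRZl a mu2). Qed.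

Lemma P2_integrable_coord mu i : P2 mu ->
  mu.-integrable setT (EFin \o (fun x : T => (x : V) ord0 i)).
Proof.
move=> mu2; apply: (P2_integrable_dominated (a := 1) (c := 1) mu2 (measurable_coord i)).
by move=> x; rewrite mul1r norm_coord_le.
Qed.

Lemma P2_integrable_dotp mu (k : V) : P2 mu ->
  mu.-integrable setT (EFin \o (fun x : T => dotp (x : V) k)).
Proof.
move=> mu2; apply: (P2_integrable_dominated (a := 1) (c := sqnorm k) mu2 (measurable_dotp k)).
by move=> x; rewrite mul1r norm_dotp_le.
Qed.

Lemma P2_integrable_sqnormB mu (k : V) : P2 mu ->
  mu.-integrable setT (EFin \o (fun x : T => sqnorm ((x : V) - k))).
Proof.
move=> mu2; apply: (P2_integrable_dominated (a := 3) (c := 3 * sqnorm k) mu2).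
  exact: measurable_sqnormB.
move=> x; rewrite ger0_norm ?sqnorm_ge0 // sqnormB.
have := norm_dotp_le x k; have := sqnorm_ge0 x; have := sqnorm_ge0 k.
rewrite ler_norml => ? ? /andP[? ?]; lra.
Qed.

Lemma Rintegral_dotp mu (k : V) : P2 mu ->
  Rintegral mu setT (fun x : T => dotp (x : V) k) = dotp (mean mu) k.
Proof.
move=> mu2; rewrite Rintegral_sum; last first.
  move=> i; have := integrableRZl (k ord0 i) (P2_integrable_coord i mu2).
  by move/eq_integrableR; apply => x; rewrite mulrC.
apply: eq_bigr => i _; rewrite RintegralZr ?mxE //; exact: P2_integrable_coord.
Qed.

Lemma moment2E mu : P2 mu -> moment2 mu = Var mu + sqnorm (mean mu).
Proof.
move=> mu2; rewrite /Var.
under eq_Rintegral do rewrite sqnormB.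
have idot := integrableRZl 2 (P2_integrable_dotp (mean mu) mu2).
rewrite RintegralD // ?RintegralB // ?RintegralZl ?Rintegral_dotp ?Rintegral_prob_cst //.
- by rewrite /moment2 /sqnorm; ring.
- exact: P2_integrable_dotp.
- exact: integrableRB.
- exact: integrable_prob_cst.
Qed.

Lemma Var_ge0 mu : 0 <= Var mu.
Proof. by apply: Rintegral_ge0 => x _; exact: sqnorm_ge0. Qed.

Lemma moment2_ge0 mu : 0 <= moment2 mu.
Proof. by apply: Rintegral_ge0 => x _; exact: sqnorm_ge0. Qed.

Section Dilation.
Variables (mu rho : probability T R) (t : R).
Hypotheses (mu2 : P2 mu) (rhoE : is_push (dil t) mu rho).

Lemma P2_dil : P2 rho.
Proof.
apply/(integrable_push (measurable_dil t) rhoE measurable_sqnorm).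
by apply: eq_integrableR (integrableRZl (t ^+ 2) mu2) _ => x /=; rewrite /dil sqnormZ.
Qed.

Lemma mean_dil : mean rho = t *: mean mu.
Proof.
apply/rowP => i; rewrite !mxE.
rewrite (Rintegral_push (measurable_dil t) rhoE (measurable_coord i)); last first.
  by apply: eq_integrableR (integrableRZl t (P2_integrable_coord i mu2)) _ => x /=;
    rewrite /dil mxE.
rewrite -RintegralZl //; last exact: P2_integrable_coord.
by apply: eq_Rintegral => x _ /=; rewrite /dil mxE.
Qed.

Lemma Var_dil : Var rho = t ^+ 2 * Var mu.
Proof.
rewrite /Var mean_dil.
rewrite (Rintegral_push (measurable_dil t) rhoE (measurable_sqnormB _)); last first.
  apply: eq_integrableR (integrableRZl (t ^+ 2) (P2_integrable_sqnormB (mean mu) mu2)) _.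
  by move=> x /=; rewrite /dil -scalerBr sqnormZ.
rewrite -RintegralZl //; last exact: P2_integrable_sqnormB.
by apply: eq_Rintegral => x _ /=; rewrite /dil -scalerBr sqnormZ.
Qed.

End Dilation.

Section Translation.
Variables (mu rho : probability T R) (k : V).
Hypotheses (mu2 : P2 mu) (rhoE : is_push (transl k) mu rho).

Lemma P2_transl : P2 rho.
Proof.
apply/(integrable_push (measurable_transl k) rhoE measurable_sqnorm).
apply: eq_integrableR (P2_integrable_sqnormB (- k) mu2) _ => x /=.
by rewrite /transl opprK.
Qed.

Lemma mean_transl : mean rho = mean mu + k.
Proof.
apply/rowP => i; rewrite !mxE.
have icoord := P2_integrable_coord i mu2.
rewrite (Rintegral_push (measurable_transl k) rhoE (measurable_coord i)); last first.
  apply: eq_integrableR (integrableRD icoord (integrable_prob_cst mu (k ord0 i))) _.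
  by move=> x /=; rewrite /transl mxE.
rewrite -[k ord0 i](Rintegral_prob_cst mu) -RintegralD //; last exact: integrable_prob_cst.
by apply: eq_Rintegral => x _ /=; rewrite /transl mxE.
Qed.

Lemma Var_transl : Var rho = Var mu.
Proof.
have shift (x : V) : x + k - (mean mu + k) = x - mean mu.
  by rewrite opprD addrACA subrr addr0.
rewrite /Var mean_transl.
rewrite (Rintegral_push (measurable_transl k) rhoE (measurable_sqnormB _)); last first.
  by apply: eq_integrableR (P2_integrable_sqnormB (mean mu) mu2) _ => x /=; rewrite /transl shift.
by apply: eq_Rintegral => x _ /=; rewrite /transl shift.
Qed.

End Translation.

End Moments.

Section Couplings.
Context {R : realType} {d : nat}.
Local Notation T := (Rd R d).
Local Notation T2 := (T * T)%type.
Local Notation V := ('rV[R]_d).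
Implicit Types (mu nu rho : probability T R) (pi gam : probability T2 R).

Lemma coupling_fst mu nu pi : coupling mu nu pi -> is_pushforward fst pi mu.
Proof.
move=> pimunu A mA; have [<- _] := pimunu A mA; congr (pi _).
by apply/seteqP; split => z /=; [move=> [] | move=> Az; split].
Qed.

Lemma coupling_snd mu nu pi : coupling mu nu pi -> is_pushforward snd pi nu.
Proof.
move=> pimunu A mA; have [_ <-] := pimunu A mA; congr (pi _).
by apply/seteqP; split => z /=; [move=> [] | move=> Az; split].
Qed.

Lemma coupling_map_fst (f : T -> T) (mf : measurable_fun setT f) mu nu pi rho gam :
  coupling mu nu pi -> is_push f mu rho ->
  is_push2 (fun z : T2 => (f z.1, z.2)) pi gam -> coupling rho nu gam.
Proof.
move=> pimunu rhoE gamE A mA; split; (rewrite gamE; last exact: measurableX).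
- have mfA : measurable (f @^-1` A) by have := mf measurableT A mA; rewrite setTI.
  by rewrite (rhoE A mA); have [<- _] := pimunu _ mfA; congr (pi _).
- by have [_ <-] := pimunu _ mA; congr (pi _).
Qed.

Section Marginals.
Variables (mu nu : probability T R) (pi : probability T2 R).
Hypothesis pimunu : coupling mu nu pi.
Variables (g : T -> R) (mg : measurable_fun setT g).

Lemma integrable_fst : mu.-integrable setT (EFin \o g) ->
  pi.-integrable setT (EFin \o (g \o fst)).
Proof. by move=> ig; apply/(integrable_push measurable_fst (coupling_fst pimunu) mg). Qed.

Lemma integrable_snd : nu.-integrable setT (EFin \o g) ->
  pi.-integrable setT (EFin \o (g \o snd)).
Proof. by move=> ig; apply/(integrable_push measurable_snd (coupling_snd pimunu) mg). Qed.

Lemma Rintegral_fst : mu.-integrable setT (EFin \o g) ->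
  Rintegral pi setT (g \o fst) = Rintegral mu setT g.
Proof.
move=> ig; rewrite (Rintegral_push measurable_fst (coupling_fst pimunu) mg) //.
exact: integrable_fst.
Qed.

Lemma Rintegral_snd : nu.-integrable setT (EFin \o g) ->
  Rintegral pi setT (g \o snd) = Rintegral nu setT g.
Proof.
move=> ig; rewrite (Rintegral_push measurable_snd (coupling_snd pimunu) mg) //.
exact: integrable_snd.
Qed.

End Marginals.

Lemma measurable_dotp12 : measurable_fun [set: T2] (fun z : T2 => dotp (z.1 : V) (z.2 : V)).
Proof.
by apply: measurable_row_dotp; apply: measurable_row_comp;
  [exact: measurable_fst|exact: measurable_snd].
Qed.

Section Correlation.
Variables (mu nu : probability T R) (pi : probability T2 R).
Hypotheses (pimunu : coupling mu nu pi) (mu2 : P2 mu) (nu2 : P2 nu).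

Let isq1 : pi.-integrable setT (EFin \o (fun z : T2 => sqnorm (z.1 : V))) :=
  integrable_fst pimunu measurable_sqnorm mu2.
Let isq2 : pi.-integrable setT (EFin \o (fun z : T2 => sqnorm (z.2 : V))) :=
  integrable_snd pimunu measurable_sqnorm nu2.

Lemma integrable_corr :
  pi.-integrable setT (EFin \o (fun z : T2 => dotp (z.1 : V) (z.2 : V))).
Proof.
apply: (integrable_dominated (c := 0) measurable_dotp12 (integrableRD isq1 isq2)).
by move=> z; rewrite addr0 norm_dotp_le.
Qed.

Lemma corr_le_moment2 s : 0 < s -> 2 * corr pi <= s * moment2 mu + s^-1 * moment2 nu.
Proof.
move=> s0; have ic := integrable_corr; have jc := integrableRZl 2 ic.
have j1 := integrableRZl s isq1; have j2 := integrableRZl s^-1 isq2.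
rewrite /corr /moment2 -(Rintegral_fst pimunu measurable_sqnorm mu2).
rewrite -(Rintegral_snd pimunu measurable_sqnorm nu2) -!RintegralZl // -RintegralD //.
apply: le_Rintegral => //; first exact: integrableRD.
by move=> z _; exact: dotp_le_sqnorm.
Qed.

Lemma Kantorovich_integral : mean nu = 0 ->
  Rintegral pi setT (fun z : T2 => dotp ((z.1 : V) - mean nu) ((z.2 : V) - z.1))
  = corr pi - moment2 mu.
Proof.
move=> nu0; rewrite nu0.
under eq_Rintegral do rewrite subr0 dotpBr.
by rewrite RintegralB // ?integrable_corr // /moment2 -(Rintegral_fst pimunu measurable_sqnorm mu2).
Qed.

Lemma corr_dil t gam : is_push2 (fun z : T2 => (dil t z.1, z.2)) pi gam ->
  corr gam = t * corr pi.
Proof.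
move=> gamE; rewrite /corr.
rewrite (Rintegral_push (measurable_map_fst (measurable_dil t)) gamE measurable_dotp12).
  rewrite -RintegralZl //; last exact: integrable_corr.
  by apply: eq_Rintegral => z _ /=; rewrite /dil dotpZl.
by apply: eq_integrableR (integrableRZl t integrable_corr) _ => z /=; rewrite /dil dotpZl.
Qed.

Lemma corr_transl k gam : mean nu = 0 ->
  is_push2 (fun z : T2 => (transl k z.1, z.2)) pi gam -> corr gam = corr pi.
Proof.
move=> nu0 gamE.
have idot := integrable_snd pimunu (measurable_dotp k) (P2_integrable_dotp k nu2).
have dotk0 : Rintegral pi setT (fun z : T2 => dotp (z.2 : V) k) = 0.
  rewrite (Rintegral_snd pimunu (measurable_dotp k)) ?P2_integrable_dotp //.
  by rewrite Rintegral_dotp // nu0 dotp0l.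
rewrite /corr (Rintegral_push (measurable_map_fst (measurable_transl k)) gamE measurable_dotp12).
  rewrite -[X in _ = X]addr0 -dotk0 -RintegralD //; last exact: integrable_corr.
  by apply: eq_Rintegral => z _ /=; rewrite /transl dotpDl (dotpC k).
apply: eq_integrableR (integrableRD integrable_corr idot) _ => z /=.
by rewrite /transl dotpDl (dotpC k).
Qed.

End Correlation.

End Couplings.

Lemma probability_preimage_cst (R : realType) dX (X : measurableType dX) (Y : Type)
    (P : probability X R) (a : Y) (A : set Y) :
  P (cst a @^-1` A) = (a \in A)%:R%:E.
Proof. by rewrite preimage_cst; case: ifP => _; rewrite ?probability_setT ?measure0. Qed.

Section DiracAtZero.
Context {R : realType} {d : nat}.
Local Notation T := (Rd R d).
Local Notation T2 := (T * T)%type.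
Variables (mu nu : probability T R).
Hypotheses (mu2 : P2 mu) (nu20 : P20 nu).

(* Realising the Dirac mass at 0 as the image of [mu] under [dil 0] puts it in
   every cone containing [mu]. *)
Definition delta0 : probability T R := pushprob mu (measurable_dil 0).

Lemma measurable_pair0 : measurable_fun [set: T] (fun y : T => ((0 : T), y) : T2).
Proof. exact: measurable_fun_pair. Qed.

Definition delta0_coupling : probability T2 R := pushprob nu measurable_pair0.

Lemma delta0E : is_push (dil 0) mu delta0.
Proof. exact: pushprobE. Qed.

Lemma dil0 : dil 0 = cst (0 : T).
Proof. by apply/funext => x; rewrite /dil scale0r. Qed.

Lemma is_delta0_delta0 : is_delta0 delta0.
Proof. by move=> A mA; rewrite delta0E // diracE dil0 probability_preimage_cst. Qed.

Lemma P2_delta0 : P2 delta0.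
Proof. exact: P2_dil mu2 delta0E. Qed.

Lemma mean_delta0 : mean delta0 = 0.
Proof. by rewrite (mean_dil mu2 delta0E) scale0r. Qed.

Lemma Var_delta0 : Var delta0 = 0.
Proof. by rewrite (Var_dil mu2 delta0E) expr0n mul0r. Qed.

Lemma coupling_delta0 : coupling delta0 nu delta0_coupling.
Proof.
move=> A mA; split; rewrite pushprobE; try exact: measurableX.
  rewrite delta0E // dil0 probability_preimage_cst -(probability_preimage_cst nu).
  by congr (nu _); apply/seteqP; split => y /=; [case|split].
by congr (nu _); apply/seteqP; split => y /=; [case|split].
Qed.

Lemma corr_delta0_coupling : corr delta0_coupling = 0.
Proof.
have dot0 : (fun z : T2 => dotp (z.1 : 'rV_d) (z.2 : 'rV_d)) \o (fun y : T => (0, y)) = cst 0.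
  by apply/funext => y /=; rewrite dotp0l.
rewrite /corr (Rintegral_push measurable_pair0 (pushprobE nu _) measurable_dotp12) dot0.
  exact: Rintegral_prob_cst.
exact: integrable_prob_cst.
Qed.

Lemma Kdom_delta0 : Kdom delta0 nu.
Proof.
exists delta0_coupling; split; first exact: coupling_delta0.
have [nu2 nu0] := nu20.
rewrite (Kantorovich_integral coupling_delta0 P2_delta0 nu2 nu0) corr_delta0_coupling.
by rewrite (moment2E P2_delta0) Var_delta0 mean_delta0 sqnorm0 addr0 subr0.
Qed.

End DiracAtZero.

Section VarianceProblem.
Context {R : realType} {d : nat}.
Local Notation T := (Rd R d).
Local Notation T2 := (T * T)%type.
Implicit Types (mu rho : probability T R) (pi gam : probability T2 R).
Variables (nu : probability T R) (D : set (probability T R)).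
Hypotheses (nu20 : P20 nu) (DP2 : forall mu, D mu -> P2 mu)
  (Dcone : is_cone D) (Dtransl : transl_invariant D).

Let nu2 : P2 nu. Proof. by case: nu20. Qed.
Let nu0 : mean nu = 0. Proof. by case: nu20. Qed.

Lemma corr_le_P1 mu pi : feasible1 D nu mu pi -> ((corr pi)%:E <= P1 D nu)%E.
Proof. by move=> feas; apply: ereal_sup_ubound; exists pi => //; exists mu. Qed.

Lemma D_MK_delta0 mu : D mu -> (D `&` MK nu) (delta0 mu).
Proof.
move=> Dmu; have mu2 := DP2 Dmu; split; first by apply: (Dcone Dmu (lexx 0)); exact: delta0E.
by split; [exact: P2_delta0|exact: Kdom_delta0].
Qed.

Lemma P1_ge0 : D !=set0 -> (0 <= P1 D nu)%E.
Proof.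
move=> [mu Dmu]; have mu2 := DP2 Dmu.
have feas : feasible1 D nu (delta0 mu) (delta0_coupling nu).
  split; first exact: (D_MK_delta0 Dmu).1.
  split; first by split; [exact: P2_delta0|exact: mean_delta0].
  by split; [exact: coupling_delta0|rewrite Var_delta0].
by have := corr_le_P1 feas; rewrite corr_delta0_coupling.
Qed.

Lemma corr_Kdom mu pi : P2 mu -> coupling mu nu pi ->
  Rintegral pi setT (fun z : T2 => dotp ((z.1 : 'rV_d) - mean nu) ((z.2 : 'rV_d) - z.1)) = 0 ->
  corr pi = Var mu + sqnorm (mean mu).
Proof.
move=> mu2 pimunu; rewrite (Kantorovich_integral pimunu mu2 nu2 nu0) => /eqP.
by rewrite subr_eq0 => /eqP ->; rewrite moment2E.
Qed.

Lemma feasible_dil_unit mu pi rho gam : D mu -> P2 mu -> mean mu = 0 ->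
  coupling mu nu pi -> 0 < Var mu ->
  let lam := (Num.sqrt (Var mu))^-1 in
  is_push (dil lam) mu rho -> is_push2 (fun z : T2 => (dil lam z.1, z.2)) pi gam ->
  feasible1 D nu rho gam.
Proof.
move=> Dmu mu2 mu0 pimunu Vmu_gt0 lam rhoE gamE.
have lam_ge0 : 0 <= lam by rewrite invr_ge0 sqrtr_ge0.
split; first exact: (Dcone Dmu lam_ge0 rhoE).
split; first by split; [exact: P2_dil mu2 rhoE|rewrite (mean_dil mu2 rhoE) mu0 scaler0].
split; first exact: (coupling_map_fst (measurable_dil lam) pimunu rhoE gamE).
rewrite (Var_dil mu2 rhoE) /lam exprVn sqr_sqrtr ?mulVf //; last exact: ltW.
by rewrite lt0r_neq0.
Qed.

(* Centring [mu] by a translation does not change the correlation with the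
   centred [nu]. *)
Lemma feasible_normalize mu pi : D mu -> P2 mu -> coupling mu nu pi -> 0 < Var mu ->
  exists rho gam, feasible1 D nu rho gam /\ corr gam = corr pi / Num.sqrt (Var mu).
Proof.
move=> Dmu mu2 pimunu Vmu_gt0; set m := mean mu.
pose mu1 := pushprob mu (measurable_transl (- m)).
pose pi1 := pushprob pi (measurable_map_fst (measurable_transl (- m))).
have mu1E : is_push (transl (- m)) mu mu1 by exact: pushprobE.
have pi1E : is_push2 (fun z : T2 => (transl (- m) z.1, z.2)) pi pi1 by exact: pushprobE.
have pi1mu1nu := coupling_map_fst (measurable_transl (- m)) pimunu mu1E pi1E.
have mu12 := P2_transl mu2 mu1E.
have mu10 : mean mu1 = 0 by rewrite (mean_transl mu2 mu1E) subrr.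
have Vmu1 : Var mu1 = Var mu := Var_transl mu2 mu1E.
set lam := (Num.sqrt (Var mu1))^-1.
pose rho := pushprob mu1 (measurable_dil lam).
pose gam := pushprob pi1 (measurable_map_fst (measurable_dil lam)).
have rhoE : is_push (dil lam) mu1 rho by exact: pushprobE.
have gamE : is_push2 (fun z : T2 => (dil lam z.1, z.2)) pi1 gam by exact: pushprobE.
exists rho, gam; split.
  by apply: feasible_dil_unit (Dtransl Dmu mu1E) mu12 mu10 pi1mu1nu _ rhoE gamE; rewrite Vmu1.
rewrite (corr_dil pi1mu1nu mu12 nu2 gamE) (corr_transl pimunu mu2 nu2 nu0 pi1E).
by rewrite /lam Vmu1 mulrC.
Qed.

Lemma MK_le_P1 mu : (D `&` MK nu) mu -> 0 < Var mu ->
  (((Var mu + sqnorm (mean mu)) / Num.sqrt (Var mu))%:E <= P1 D nu)%E.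
Proof.
move=> [Dmu [mu2 [pi [pimunu Kpi]]]] Vmu_gt0.
have [rho [gam [feas corr_gam]]] := feasible_normalize Dmu mu2 pimunu Vmu_gt0.
by rewrite -(corr_Kdom mu2 pimunu Kpi) -corr_gam; exact: (corr_le_P1 feas).
Qed.

Lemma sqrt_Var_le_P1 mu : (D `&` MK nu) mu -> ((Num.sqrt (Var mu))%:E <= P1 D nu)%E.
Proof.
move=> DMKmu; have := Var_ge0 mu; rewrite le0r => /orP[/eqP Vmu0|Vmu_gt0].
  by rewrite Vmu0 sqrtr0; apply: P1_ge0; exists mu; case: DMKmu.
apply: le_trans (MK_le_P1 DMKmu Vmu_gt0).
have sqrt_gt0 : 0 < Num.sqrt (Var mu) by rewrite sqrtr_gt0.
rewrite lee_fin ler_pdivlMr // -expr2 sqr_sqrtr ?Var_ge0 // lerDl.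
exact: sqnorm_ge0.
Qed.

Lemma Var_le_sqr_P1 mu c : P1 D nu = c%:E -> (D `&` MK nu) mu -> Var mu <= c ^+ 2.
Proof.
move=> P1c /sqrt_Var_le_P1; rewrite P1c lee_fin => le_sqrt_c.
have := sqr_sqrtr (Var_ge0 mu); have := sqrtr_ge0 (Var mu).
set s := Num.sqrt (Var mu) in le_sqrt_c *; nra.
Qed.

(* A degenerate [mu] has no positive correlation with [nu]: otherwise Young's
   inequality with weight [s := (c + moment2 nu) / c] would give [2 c <= c]. *)
Lemma feasible_Var_gt0 mu pi : feasible1 D nu mu pi -> 0 < corr pi -> 0 < Var mu.
Proof.
move=> [_ [[mu2 mu0] [pimunu _]]] c_gt0; rewrite lt0r Var_ge0 andbT.
apply/eqP => Vmu0; set c := corr pi in c_gt0; set a := moment2 nu.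
have a_ge0 : 0 <= a := moment2_ge0 nu.
have s_gt0 : 0 < (a + c) / c by rewrite divr_gt0 // ltr_wpDl.
have := corr_le_moment2 pimunu mu2 nu2 s_gt0.
rewrite moment2E // Vmu0 mu0 sqnorm0 addr0 mulr0 add0r invf_div -/c -/a.
have : c / (a + c) * a <= c by rewrite mulrAC ler_pdivrMr ?ltr_wpDl //; nra.
lra.
Qed.

Lemma feasible_dil_MK mu pi t rho : feasible1 D nu mu pi -> 0 <= t ->
  t * corr pi = t ^+ 2 * Var mu -> is_push (dil t) mu rho -> (D `&` MK nu) rho.
Proof.
move=> [Dmu [[mu2 mu0] [pimunu _]]] t_ge0 tcorr rhoE.
split; first exact: (Dcone Dmu t_ge0 rhoE).
have rho2 := P2_dil mu2 rhoE; split => //.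
pose gam := pushprob pi (measurable_map_fst (measurable_dil t)).
have gamE : is_push2 (fun z : T2 => (dil t z.1, z.2)) pi gam by exact: pushprobE.
have gamrhonu := coupling_map_fst (measurable_dil t) pimunu rhoE gamE.
exists gam; split => //; rewrite (Kantorovich_integral gamrhonu rho2 nu2 nu0).
rewrite (corr_dil pimunu mu2 nu2 gamE) (moment2E rho2) (Var_dil mu2 rhoE).
by rewrite (mean_dil mu2 rhoE) mu0 scaler0 sqnorm0 addr0 tcorr subrr.
Qed.

(* The dilation by [corr pi / Var mu] is the one that makes the Kantorovich
   integral vanish. *)
Lemma feasible_dil_Var mu pi : feasible1 D nu mu pi -> 0 < corr pi ->
  exists2 rho, (D `&` MK nu) rho & Var rho = corr pi ^+ 2 / Var mu.
Proof.
move=> feas c_gt0; have Vmu_gt0 := feasible_Var_gt0 feas c_gt0.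
have mu2 : P2 mu by case: feas => _ [[]].
set t := corr pi / Var mu; have t_ge0 : 0 <= t by rewrite divr_ge0 // ltW.
pose rho := pushprob mu (measurable_dil t).
have rhoE : is_push (dil t) mu rho by exact: pushprobE.
exists rho.
  by apply: feasible_dil_MK feas t_ge0 _ rhoE; rewrite /t; field; exact: lt0r_neq0.
by rewrite (Var_dil mu2 rhoE) /t; field; exact: lt0r_neq0.
Qed.

Lemma feasible_sqr_corr_le_Var mu pi : feasible1 D nu mu pi -> 0 < corr pi ->
  exists2 rho, (D `&` MK nu) rho & corr pi ^+ 2 <= Var rho.
Proof.
move=> feas c_gt0; have Vmu_gt0 := feasible_Var_gt0 feas c_gt0.
have [rho DMKrho Vrho] := feasible_dil_Var feas c_gt0; exists rho => //.
have Vmu_le1 : Var mu <= 1 by case: feas => _ [_ []].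
by rewrite Vrho ler_pdivlMr // ler_piMr // sqr_ge0.
Qed.

Lemma P1_le_sqrt_maxVar rho : maxVar D nu rho -> (P1 D nu <= (Num.sqrt (Var rho))%:E)%E.
Proof.
move=> [_ rho_max]; apply: ge_ereal_sup => _ [pi [mu feas] <-].
have [c_le0|c_gt0] := lerP (corr pi) 0; first by rewrite lee_fin (le_trans c_le0) ?sqrtr_ge0.
have [rho' DMKrho' c_le] := feasible_sqr_corr_le_Var feas c_gt0.
rewrite lee_fin -(ger0_norm (ltW c_gt0)) -sqrtr_sqr ler_wsqrtr //.
exact: le_trans c_le (rho_max _ DMKrho').
Qed.

Lemma P1_gt0_feasible : (0 < P1 D nu)%E ->
  exists mu pi, feasible1 D nu mu pi /\ 0 < corr pi.
Proof. by move=> /ereal_sup_gt [_ [pi [mu feas] <-]]; rewrite lte_fin; exists mu, pi. Qed.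

Lemma maxVar_delta0 mu0 : D mu0 -> P1 D nu = 0%E -> maxVar D nu (delta0 mu0).
Proof.
move=> Dmu0 P1_0; split => [|mu DMKmu]; first exact: (D_MK_delta0 Dmu0).
by rewrite (Var_delta0 (DP2 Dmu0)); have := Var_le_sqr_P1 P1_0 DMKmu; rewrite expr0n.
Qed.

Lemma P1_eq0_supVar : D !=set0 ->
  P1 D nu = 0%E <-> ereal_sup [set (Var mu)%:E | mu in D `&` MK nu] = 0%E.
Proof.
move=> D0; have [mu0 Dmu0] := D0; have Vdelta := Var_delta0 (DP2 Dmu0).
split => [P1_0|sup0].
  have [DMKdelta delta_max] := maxVar_delta0 Dmu0 P1_0.
  apply: le_anti; apply/andP; split.
    by apply: ge_ereal_sup => _ [mu DMKmu <-]; rewrite lee_fin -Vdelta delta_max.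
  by apply: ereal_sup_ubound; exists (delta0 mu0) => //; rewrite Vdelta.
have := P1_ge0 D0; rewrite le_eqVlt => /orP[/eqP <- //|P1_gt0].
have [mu [pi [feas c_gt0]]] := P1_gt0_feasible P1_gt0.
have [rho DMKrho c_le] := feasible_sqr_corr_le_Var feas c_gt0.
have : ((Var rho)%:E <= 0)%E by rewrite -sup0; apply: ereal_sup_ubound; exists rho.
by rewrite lee_fin => /(le_trans c_le); rewrite leNgt exprn_gt0.
Qed.

Section Optimizers.
Hypothesis P1_gt0 : (0 < P1 D nu)%E.

Lemma attainsP1_Var muh pih : attainsP1 D nu muh pih -> Var muh = 1.
Proof.
move=> [feas P1E]; set c := corr pih in P1E.
have c_gt0 : 0 < c by rewrite -lte_fin P1E.
have Vmuh_gt0 := feasible_Var_gt0 feas c_gt0.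
have [rho DMKrho Vrho] := feasible_dil_Var feas c_gt0.
have := Var_le_sqr_P1 (esym P1E) DMKrho.
rewrite Vrho -/c ler_pdivrMr // ler_pMr ?exprn_gt0 // => Vmuh_ge1.
by apply: le_anti; rewrite Vmuh_ge1 andbT; case: feas => _ [_ []].
Qed.

Lemma attainsP1_dil_maxVar muh pih rho : attainsP1 D nu muh pih ->
  is_push (dil (fine (P1 D nu))) muh rho -> maxVar D nu rho.
Proof.
move=> attains; have Vmuh := attainsP1_Var attains.
case: attains => feas P1E; set c := corr pih in P1E; rewrite -P1E /= => rhoE.
have c_gt0 : 0 < c by rewrite -lte_fin P1E.
have mu2 : P2 muh by case: feas => _ [[]].
have Vrho : Var rho = c ^+ 2 by rewrite (Var_dil mu2 rhoE) Vmuh mulr1.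
split; first by apply: feasible_dil_MK feas (ltW c_gt0) _ rhoE; rewrite Vmuh mulr1 expr2.
by move=> mu DMKmu; rewrite Vrho; exact: Var_le_sqr_P1 (esym P1E) DMKmu.
Qed.

Lemma maxVar_Var_gt0 muc : maxVar D nu muc -> 0 < Var muc.
Proof.
move=> [_ muc_max]; have [mu [pi [feas c_gt0]]] := P1_gt0_feasible P1_gt0.
have [rho DMKrho c_le] := feasible_sqr_corr_le_Var feas c_gt0.
by apply: lt_le_trans (le_trans c_le (muc_max _ DMKrho)); rewrite exprn_gt0.
Qed.

Lemma maxVar_mean_P1 muc : maxVar D nu muc ->
  mean muc = 0 /\ P1 D nu = (Num.sqrt (Var muc))%:E.
Proof.
move=> max_muc; have Vmuc_gt0 := maxVar_Var_gt0 max_muc.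
have P1_le := P1_le_sqrt_maxVar max_muc.
have DMKmuc : (D `&` MK nu) muc by case: max_muc.
have := le_trans (MK_le_P1 DMKmuc Vmuc_gt0) P1_le.
have sqrt_gt0 : 0 < Num.sqrt (Var muc) by rewrite sqrtr_gt0.
rewrite lee_fin ler_pdivrMr // -expr2 sqr_sqrtr ?Var_ge0 // gerDl => m_le0.
split; first by apply: sqnorm_eq0; apply: le_anti; rewrite m_le0 sqnorm_ge0.
by apply: le_anti; rewrite P1_le sqrt_Var_le_P1.
Qed.

Lemma maxVar_dil_attainsP1 muc pic rho gam : maxVar D nu muc ->
  coupling muc nu pic -> (forall pi, coupling muc nu pi -> corr pi <= corr pic) ->
  let lam := (Num.sqrt (Var muc))^-1 in
  is_push (dil lam) muc rho -> is_push2 (fun z : T2 => (dil lam z.1, z.2)) pic gam ->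
  attainsP1 D nu rho gam.
Proof.
move=> max_muc picmucnu pic_max lam rhoE gamE.
have Vmuc_gt0 := maxVar_Var_gt0 max_muc; have [muc0 P1E] := maxVar_mean_P1 max_muc.
have [[Dmuc [muc2 [piK [piKmucnu KpiK]]]] _] := max_muc.
have feas := feasible_dil_unit Dmuc muc2 muc0 picmucnu Vmuc_gt0 rhoE gamE.
split => //; apply: le_anti; rewrite (corr_le_P1 feas) /= P1E lee_fin.
have := pic_max _ piKmucnu; rewrite (corr_Kdom muc2 piKmucnu KpiK) muc0 sqnorm0 addr0.
have lam_ge0 : 0 <= lam by rewrite invr_ge0 sqrtr_ge0.
move=> /(ler_wpM2l lam_ge0); rewrite -(corr_dil picmucnu muc2 nu2 gamE); apply: le_trans.
rewrite /lam -[X in _ * X](sqr_sqrtr (ltW Vmuc_gt0)) expr2 mulKf //.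
by rewrite lt0r_neq0 // sqrtr_gt0.
Qed.

End Optimizers.

End VarianceProblem.

Unset Implicit Arguments.
Theorem mainTheorem20 (R : realType) (d : nat)
    (nu : probability (Rd R d) R) (D : set (probability (Rd R d) R)) :
  P20 nu ->
  D !=set0 -> (forall mu, D mu -> P2 mu) ->
  is_cone D -> transl_invariant D ->
  ((0 < P1 D nu)%E ->
    (* (a) *)
    (forall muh pih, attainsP1 D nu muh pih ->
       Var muh = 1 /\
       exists rho, is_push (dil (fine (P1 D nu))) muh rho /\ maxVar D nu rho)
    /\
    (* (b) *)
    (forall muc pic, maxVar D nu muc -> ~ is_delta0 muc ->
       coupling muc nu pic ->
       (forall pi, coupling muc nu pi -> corr pi <= corr pic) ->
       let lam := (Num.sqrt (Var muc))^-1 in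
       exists rho gam,
         is_push (dil lam) muc rho /\
         is_push2 (fun z : Rd R d * Rd R d => (dil lam z.1, z.2)) pic gam /\
         attainsP1 D nu rho gam))
  /\
  (P1 D nu = 0%E <->
     ereal_sup [set (Var mu)%:E | mu in D `&` MK nu] = 0%E)
  /\
  (P1 D nu = 0%E ->
     exists rho, is_delta0 rho /\ maxVar D nu rho).
Proof.
move=> nu20 D0 DP2 Dcone Dtransl.
split; [move=> P1_gt0; split|split; first exact: P1_eq0_supVar].
- move=> muh pih attains.
  split; first exact: (attainsP1_Var nu20 DP2 Dcone Dtransl P1_gt0 attains).
  exists (pushprob muh (measurable_dil (fine (P1 D nu)))); split; first exact: pushprobE.
  exact: (attainsP1_dil_maxVar nu20 DP2 Dcone Dtransl P1_gt0 attains (pushprobE _ _)).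
-
  move=> muc pic max_muc _ picmucnu pic_max lam.
  exists (pushprob muc (measurable_dil lam)),
    (pushprob pic (measurable_map_fst (measurable_dil lam))).
  do 2 (split; first exact: pushprobE).
  exact: (maxVar_dil_attainsP1 nu20 DP2 Dcone Dtransl P1_gt0 max_muc picmucnu pic_max
    (pushprobE _ _) (pushprobE _ _)).
- move=> P1_0; have [mu0 Dmu0] := D0.
  exists (delta0 mu0); split; first exact: is_delta0_delta0.
  exact: (maxVar_delta0 nu20 DP2 Dcone Dtransl Dmu0 P1_0).
Qed.
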